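(* Fix $\alpha_1<1$. Let $\mathcal U^{\mathrm{item}}_{\mathrm{lex}}=\{u\in\mathcal U:\forall u'\in\mathcal U,\ u_{\mathcal I}\ge_{\mathrm{lex}}u'_{\mathcal I}\}$ and let $u^*\in\arg\max_{u\in\mathcal U^{\mathrm{item}}_{\mathrm{lex}}}\sum_{i\in\mathcal N}\psi(u_i,\alpha_1)$, where we assume this maximum is $>-\infty$. Then for every $\eta>\max(1,\max_{j\in\mathcal I}u^*_j)$ and every $u\in\mathcal U$ there exists $\alpha_0<0$ such that for all $\alpha\le\alpha_0$, $$W_{(1-\eta^\alpha,\alpha_1,\alpha)}(u^* )\ge W_{(1-\eta^\alpha,\alpha_1,\alpha)}(u).$$
   Context: Setup: users $\mathcal N=\{1,\dots,|\mathcal N|\}$, items $\mathcal I=\{|\mathcal N|+1,\dots,n\}$, $n=|\mathcal N|+|\mathcal I|$; exposure weights $v\in\mathbb R^{|\mathcal I|}$ with $v_1\ge\dots\ge v_{|\mathcal I|}\ge0$; values $\mu_{ij}\ge0$ for $i,j\in[n]$. A ranking tensor is $P=(P_{ijk})_{i,j\in[n],k\in[|\mathcal I|]}$ with $P_{ijk}=0$ unless $i\in\mathcal N,j\in\mathcal I$, and each $P_i=(P_{ijk})_{j\in\mathcal I,k}$ doubly stochastic; $\mathcal P$ is the set of ranking tensors; $P_{ij}v=\sum_kP_{ijk}v_k$; $u_i(P)=\sum_{j=1}^n\mu_{ij}(P_{ij}+P_{ji})v$; $\mathcal U=\{(u_i(P))_{i\in[n]}:P\in\mathcal P\}$; $u_{\mathcal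 N}=(u_i)_{i\in\mathcal N}$, $u_{\mathcal I}=(u_j)_{j\in\mathcal I}$. Leximin order: for $x\in\mathbb R^m$ with increasingly sorted entries $x_{(1)}\le\dots\le x_{(m)}$, let $\bar x_k=\sum_{l\le k}x_{(l)}$. $x>_{\mathrm{lex}}y$ iff there is $k$ with $\bar x_l=\bar y_l$ for all $l<k$ and $\bar x_k>\bar y_k$; $x\ge_{\mathrm{lex}}y$ iff not $y>_{\mathrm{lex}}x$. Welfare: $\psi(x,\alpha)=x^\alpha$ ($\alpha>0$), $\log x$ ($\alpha=0$), $-x^\alpha$ ($\alpha<0$), with $\psi(0,\alpha)=-\infty$ for $\alpha\le0$; for $\theta=(\lambda,\alpha_1,\alpha_2)$, $W_\theta(u)=(1-\lambda)\sum_{i\in\mathcal N}\psi(u_i,\alpha_1)+\lambda\sum_{j\in\mathcal I}\psi(u_j,\alpha_2)$. *)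

From HB Require Import structures.
From mathcomp Require Import all_boot all_order all_algebra.
From mathcomp Require Import all_classical all_reals all_analysis.
Set Implicit Arguments. Unset Strict Implicit. Unset Printing Implicit Defensive.
Import Order.TTheory GRing.Theory Num.Theory.
Local Open Scope ring_scope.

Section Defs.
Variable R : realType.

(* agents: users 'I_nN (inl) and items 'I_nI (inr); [n] = N ⊎ I *)
Definition agent (nN nI : nat) : finType := ('I_nN + 'I_nI)%type.

(* A ranking tensor restricted to its (possibly) nonzero block:
   P i j k for user i, item j, position k. *)
Definition is_ranking (nN nI : nat) (P : 'I_nN -> 'I_nI -> 'I_nI -> R) : Prop :=
  forall i : 'I_nN,
    (forall j k, 0 <= P i j k) /\
    (forall j, \sum_(k < nI) P i j k = 1) /\
    (forall k, \sum_(j < nI) P i j k = 1).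

Definition Pfull nN nI (P : 'I_nN -> 'I_nI -> 'I_nI -> R)
  (i j : agent nN nI) (k : 'I_nI) : R :=
  match i, j with inl a, inr b => P a b k | _, _ => 0 end.

Definition Pv nN nI (v : 'I_nI -> R) P (i j : agent nN nI) : R :=
  \sum_(k < nI) Pfull P i j k * v k.

Definition util nN nI (v : 'I_nI -> R) (mu : agent nN nI -> agent nN nI -> R)
  P (i : agent nN nI) : R :=
  \sum_(j : agent nN nI) mu i j * (Pv v P i j + Pv v P j i).

Definition inU nN nI v mu (u : agent nN nI -> R) : Prop :=
  exists P, is_ranking P /\ forall i, u i = util v mu P i.

Definition sorted_vals m (x : 'I_m -> R) : seq R :=
  sort <=%R [seq x i | i <- enum 'I_m].
Definition prefix_sum m (x : 'I_m -> R) (k : nat) : R :=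
  \sum_(l < k) nth 0 (sorted_vals x) l.
Definition lex_gt m (x y : 'I_m -> R) : Prop :=
  exists k, (1 <= k <= m)%N /\
    (forall l, (1 <= l < k)%N -> prefix_sum x l = prefix_sum y l) /\
    prefix_sum y k < prefix_sum x k.
Definition lex_ge m (x y : 'I_m -> R) : Prop := ~ lex_gt y x.

Definition items_part nN nI (u : agent nN nI -> R) : 'I_nI -> R :=
  fun j => u (inr j).

Definition inUlex nN nI v mu (u : agent nN nI -> R) : Prop :=
  inU v mu u /\ forall u', inU v mu u' -> lex_ge (items_part u) (items_part u').

Definition psi (x a : R) : \bar R :=
  if 0 < a then (x `^ a)%:E
  else if x == 0 then -oo%E
  else if a == 0 then (ln x)%:E
  else (- x `^ a)%:E.

Definition user_welfare nN nI (a1 : R) (u : agent nN nI -> R) : \bar R :=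
  (\sum_(i < nN) psi (u (inl i)) a1)%E.

Definition item_welfare nN nI (a2 : R) (u : agent nN nI -> R) : \bar R :=
  (\sum_(j < nI) psi (u (inr j)) a2)%E.

Definition W nN nI (lam a1 a2 : R) (u : agent nN nI -> R) : \bar R :=
  ((1 - lam)%:E * user_welfare a1 u + lam%:E * item_welfare a2 u)%E.

End Defs.

From mathcomp Require Import all_boot all_order all_algebra.
From mathcomp Require Import all_classical all_reals all_analysis.
From mathcomp Require Import zify ring lra.
Import Order.TTheory GRing.Theory Num.Theory.
Local Open Scope ring_scope.

(* Since u^* is leximin-optimal for the items, either u and u^* have the same
   sorted item utilities, or u^* wins at the first index i where they differ:
   c := u_(i) < d := u^*_(i) < eta.  In the first case the item welfares
   coincide, u is itself leximin-optimal, and the choice of u^* settles the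
   user part.  In the second case, unless some u_j = 0 (then W(u) = -oo), for
   alpha < 0 the item welfare gap is at least c^alpha - |I| d^alpha, while the
   user part has weight eta^alpha; as alpha -> -oo, c^alpha dominates both
   d^alpha and eta^alpha. *)

Local Notation srt x l := (nth 0 (sorted_vals x) l).

Section SortedValues.
Context {R : realType} {m : nat}.
Implicit Types x y : 'I_m -> R.

Lemma size_sorted_vals x : size (sorted_vals x) = m.
Proof. by rewrite /sorted_vals size_sort size_map size_enum_ord. Qed.

Lemma mem_sorted_vals x j : x j \in sorted_vals x.
Proof. by rewrite /sorted_vals mem_sort map_f ?mem_enum. Qed.

Lemma nth_sorted_vals x l : (l < m)%N -> exists j, srt x l = x j.
Proof.
move=> lm; have : srt x l \in sorted_vals x by rewrite mem_nth ?size_sorted_vals.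
by rewrite /sorted_vals mem_sort => /mapP [j _ ->]; exists j.
Qed.

Lemma sorted_vals_index x j : exists2 l, (l < m)%N & x j = srt x l.
Proof.
exists (index (x j) (sorted_vals x)); last by rewrite nth_index ?mem_sorted_vals.
by have := index_mem (x j) (sorted_vals x); rewrite mem_sorted_vals size_sorted_vals.
Qed.

Lemma nth_sorted_vals_le x l l' : (l <= l')%N -> (l' < m)%N -> srt x l <= srt x l'.
Proof.
move=> ll' l'm; apply: (sorted_leq_nth le_trans lexx);
  rewrite ?inE ?size_sorted_vals //; last exact: leq_ltn_trans l'm.
by apply: sort_sorted => a b; exact: le_total.
Qed.

Lemma big_sorted_vals (V : Type) (idx : V) (op : Monoid.com_law idx) x (F : R -> V) :
  \big[op/idx]_(j < m) F (x j) = \big[op/idx]_(l < m) F (srt x l).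
Proof.
transitivity (\big[op/idx]_(t <- sorted_vals x) F t).
  rewrite /sorted_vals (perm_big _ (permEl (perm_sort _ _))) big_map big_enum.
  by apply: eq_bigl => j; rewrite inE.
by rewrite (big_nth 0) size_sorted_vals big_mkord.
Qed.

Lemma prefix_sum0 x : prefix_sum x 0 = 0.
Proof. by rewrite /prefix_sum big_ord0. Qed.

Lemma prefix_sumS x l : prefix_sum x l.+1 = prefix_sum x l + srt x l.
Proof. by rewrite /prefix_sum big_ord_recr. Qed.

Lemma lex_gt_first_diff x y : lex_gt x y ->
  exists i, [/\ (i < m)%N, forall l, (l < i)%N -> srt x l = srt y l & srt y i < srt x i].
Proof.
move=> [k [/andP [k1 km] [eq_pre lt_pre]]].
have {}eq_pre l : (l < k)%N -> prefix_sum x l = prefix_sum y l.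
  by case: l => [|l] lk; rewrite ?prefix_sum0 // eq_pre.
case: k k1 km eq_pre lt_pre => // i _ im eq_pre.
rewrite !prefix_sumS eq_pre // ltrD2l => lt_i.
exists i; split => // l li.
have eq_l : prefix_sum x l = prefix_sum y l by apply: eq_pre; lia.
have : prefix_sum x l.+1 = prefix_sum y l.+1 by apply: eq_pre; lia.
by rewrite !prefix_sumS eq_l => /addrI.
Qed.

Lemma sorted_vals_lex_eq x y : ~ lex_gt x y -> ~ lex_gt y x ->
  sorted_vals x = sorted_vals y.
Proof.
move=> nxy nyx.
have eq_pre k : (k <= m)%N -> forall l, (l <= k)%N -> prefix_sum x l = prefix_sum y l.
  elim: k => [|k IH] km l lk.
    by move: lk; rewrite leqn0 => /eqP ->; rewrite !prefix_sum0.
  have {}IH := IH (ltnW km).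
  rewrite leq_eqVlt in lk; case/orP: lk => [/eqP ->|]; last exact: IH.
  case: (ltgtP (prefix_sum x k.+1) (prefix_sum y k.+1)) => // lt_pre; exfalso.
  - apply: nyx; exists k.+1; split; first exact/andP.
    by split => // l' /andP [_ l'k]; rewrite IH.
  - apply: nxy; exists k.+1; split; first exact/andP.
    by split => // l' /andP [_ l'k]; rewrite IH.
apply: (@eq_from_nth _ 0); rewrite ?size_sorted_vals // => l lm.
have := eq_pre m (leqnn m) l.+1 lm.
by rewrite !prefix_sumS (eq_pre m (leqnn m) l (ltnW lm)) => /addrI.
Qed.

End SortedValues.

Section Powers.
Context {R : realType}.

Lemma le0_ger_powR (p q a : R) : 0 < p -> p <= q -> a <= 0 -> q `^ a <= p `^ a.
Proof.
move=> p0 pq a0; have q0 : 0 < q by exact: lt_le_trans pq.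
by rewrite /powR !gt_eqF // ler_expR ler_wnM2l // ler_ln ?posrE.
Qed.

Lemma powR_lt1 (e a : R) : 1 < e -> a < 0 -> e `^ a < 1.
Proof.
move=> e1 a0; rewrite /powR gt_eqF ?(lt_trans ltr01) // expR_lt1.
by rewrite pmulr_llt0 ?ln_gt0.
Qed.

(* (p/q)^a = exp (a (ln p - ln q)) >= 1 + a (ln p - ln q) *)
Lemma mul_powR_le (p q a K : R) : 0 < p -> 0 < q ->
  K <= a * (ln p - ln q) -> K * q `^ a <= p `^ a.
Proof.
move=> p0 q0 hK; rewrite /powR !gt_eqF //.
have -> : a * ln p = a * ln q + a * (ln p - ln q) by ring.
rewrite expRD mulrC ler_wpM2l ?expR_ge0 //.
by apply: le_trans (expR_ge1Dx _); lra.
Qed.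

Lemma powR_dominates (c d e K M : R) : 0 < c -> c < d -> c < e -> 1 < e -> 0 <= M ->
  exists a0, a0 < 0 /\ forall a, a <= a0 ->
    e `^ a * K <= (1 - e `^ a) * (c `^ a - M * d `^ a).
Proof.
move=> c0 cd ce e1 M0.
have Ldc : 0 < ln d - ln c by rewrite subr_gt0 ltr_ln ?posrE // (lt_trans c0).
have Lec : 0 < ln e - ln c by rewrite subr_gt0 ltr_ln ?posrE // (lt_trans c0).
have Le : 0 < ln e := ln_gt0 e1.
set t1 := 2 * M / (ln d - ln c); set t2 := 4 * `|K| / (ln e - ln c).
set t3 := 2 / ln e.
have t1_ge0 : 0 <= t1 by rewrite divr_ge0 //; lra.
have t2_ge0 : 0 <= t2 by rewrite divr_ge0 //; lra.
have t3_ge0 : 0 <= t3 by rewrite divr_ge0 //; lra.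
exists (- (t1 + t2 + t3 + 1)); split => [|a ha]; first lra.
have ge_ratio (t L N : R) : 0 < L -> t = N / L -> t <= - a -> N <= a * - L.
  by move=> L0 -> ?; rewrite mulrN -mulNr -ler_pdivrMr.
have dom_d : (2 * M) * d `^ a <= c `^ a.
  apply: mul_powR_le c0 (lt_trans c0 cd) _.
  by rewrite -opprB; apply: (ge_ratio t1) => //; lra.
have dom_e : (4 * `|K|) * e `^ a <= c `^ a.
  apply: mul_powR_le c0 (lt_trans c0 ce) _.
  by rewrite -opprB; apply: (ge_ratio t2) => //; lra.
have small_e : 2 * e `^ a <= 1.
  have := @mul_powR_le 1 e a 2 ltr01 (lt_trans ltr01 e1); rewrite powR1; apply.
  by rewrite ln1 sub0r; apply: (ge_ratio t3) => //; lra.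
have E_ge0 := powR_ge0 e a; have C_ge0 := powR_ge0 c a; have D_ge0 := powR_ge0 d a.
have K_le := ler_norm K.
set E := e `^ a in dom_e small_e E_ge0 *; set C := c `^ a in dom_d dom_e C_ge0 *.
set D := d `^ a in dom_d D_ge0 *.
have gap : C / 2 <= C - M * D by nra.
have half : C / 4 <= (1 - E) * (C - M * D) by nra.
by nra.
Qed.

End Powers.

Section FirstDifference.
Context {R : realType} {m : nat} {x y : 'I_m -> R} {i : nat}.
Hypotheses (im : (i < m)%N) (eq_below : forall l, (l < i)%N -> srt x l = srt y l).
Hypotheses (lt_at : srt y i < srt x i) (y_gt0 : forall j, 0 < y j).

Let srt_y_gt0 l : (l < m)%N -> 0 < srt y l.
Proof. by move=> lm; have [j ->] := nth_sorted_vals y _ lm. Qed.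

Let srt_x_gt0 l : (l < m)%N -> 0 < srt x l.
Proof.
move=> lm; case: (ltnP l i) => li; first by rewrite eq_below // srt_y_gt0.
apply: lt_le_trans (nth_sorted_vals_le x _ _ li lm).
exact: lt_trans (srt_y_gt0 _ im) lt_at.
Qed.

Lemma first_diff_gt0 j : 0 < x j.
Proof. by have [l lm ->] := sorted_vals_index x j; exact: srt_x_gt0. Qed.

(* All sorted entries from i on are >= srt x i, so each contributes at most
   (srt x i)^a to the x-sum; below i the terms cancel. *)
Lemma sum_powR_first_diff a : a < 0 ->
  srt y i `^ a - m%:R * srt x i `^ a <= \sum_(j < m) y j `^ a - \sum_(j < m) x j `^ a.
Proof.
move=> a0; rewrite (big_sorted_vals _ _ _ x (fun t => t `^ a)).
rewrite (big_sorted_vals _ _ _ y (fun t => t `^ a)).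
set d := srt x i `^ a.
have key : srt y i `^ a <= \sum_(l < m) (srt y l `^ a - srt x l `^ a + d).
  rewrite (bigD1 (Ordinal im)) //= subrK lerDl; apply: sumr_ge0 => l _.
  case: (ltnP l i) => li; first by rewrite eq_below // subrr add0r powR_ge0.
  have : srt x l `^ a <= d.
    by apply: le0_ger_powR; [exact: srt_x_gt0 | exact: nth_sorted_vals_le | exact: ltW].
  by have := powR_ge0 (srt y l) a; lra.
by move: key; rewrite big_split /= sumrB sumr_const card_ord -mulr_natl; lra.
Qed.

End FirstDifference.

Section Welfare.
Context {R : realType} {nN nI : nat}.
Implicit Types (u : agent nN nI -> R) (a lam : R).

Lemma psi_lt_pinfty (x a : R) : (psi x a < +oo)%E.
Proof. by rewrite /psi; repeat case: ifP => _; rewrite ?ltry. Qed.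

Lemma psi_lt0 (x a : R) : x != 0 -> a < 0 -> psi x a = (- x `^ a)%:E.
Proof. by move=> x0 a0; rewrite /psi ltNge (ltW a0) (negbTE x0) (lt_eqF a0). Qed.

Lemma psi0_lt0 a : a < 0 -> psi 0 a = -oo%E.
Proof. by move=> a0; rewrite /psi ltNge (ltW a0) eqxx. Qed.

Lemma user_welfare_lt_pinfty a u : (user_welfare a u < +oo)%E.
Proof. by apply: lte_sum_pinfty => i _; exact: psi_lt_pinfty. Qed.

Lemma item_welfareE a u : a < 0 -> (forall j, u (inr j) != 0) ->
  item_welfare a u = (- \sum_(j < nI) u (inr j) `^ a)%:E.
Proof.
move=> a0 u_neq0; rewrite /item_welfare -sumrN -sumEFin.
by apply: eq_bigr => j _; exact: psi_lt0.
Qed.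

Lemma item_welfare_Ny a u j : a < 0 -> u (inr j) = 0 -> item_welfare a u = -oo%E.
Proof. by move=> a0 uj0; rewrite /item_welfare (bigD1 j) //= uj0 psi0_lt0 // addNye. Qed.

Lemma item_welfare_sorted_vals a u u' :
  sorted_vals (items_part u) = sorted_vals (items_part u') ->
  item_welfare a u = item_welfare a u'.
Proof.
move=> eq_srt; rewrite /item_welfare.
rewrite (big_sorted_vals _ _ _ (items_part u) (fun t => psi t a)).
by rewrite (big_sorted_vals _ _ _ (items_part u') (fun t => psi t a)) eq_srt.
Qed.

Lemma W_Ny lam a1 a2 u : 0 < lam -> lam < 1 ->
  item_welfare a2 u = -oo%E \/ user_welfare a1 u = -oo%E -> W lam a1 a2 u = -oo%E.
Proof.
by move=> lam0 lam1 [] Ny; rewrite /W Ny gt0_muleNy ?lte_fin ?subr_gt0 ?addeNy ?addNye.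
Qed.

Lemma W_le_same_items lam a1 a2 u u' : lam <= 1 ->
  item_welfare a2 u = item_welfare a2 u' ->
  (user_welfare a1 u <= user_welfare a1 u')%E -> (W lam a1 a2 u <= W lam a1 a2 u')%E.
Proof.
move=> lam1 eq_item le_user; rewrite /W eq_item leeD2r // lee_wpmul2l //.
by rewrite lee_fin subr_ge0.
Qed.

Lemma W_eventually_le_of_Ny eta a1 u u' : 1 < eta ->
  (forall a, a < 0 -> item_welfare a u = -oo%E \/ user_welfare a1 u = -oo%E) ->
  exists a0, a0 < 0 /\ forall a, a <= a0 ->
    (W (1 - eta `^ a) a1 a u <= W (1 - eta `^ a) a1 a u')%E.
Proof.
move=> eta1 Ny; exists (-1); split => [|a ha]; first lra.
have a_lt0 : a < 0 by lra.
have {}Ny := Ny a a_lt0.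
rewrite W_Ny ?leNye ?subr_gt0 ?powR_lt1 //.
by have := powR_gt0 a (lt_trans ltr01 eta1); lra.
Qed.

End Welfare.

Lemma inU_ge0 (R : realType) nN nI (v : 'I_nI -> R)
    (mu : agent nN nI -> agent nN nI -> R) u :
  (forall k, 0 <= v k) -> (forall i j, 0 <= mu i j) -> inU v mu u -> forall i, 0 <= u i.
Proof.
move=> v_ge0 mu_ge0 [P [ranking u_eq]] i; rewrite u_eq.
have Pv_ge0 a b : 0 <= Pv v P a b.
  apply: sumr_ge0 => k _; rewrite mulr_ge0 //.
  by case: a => a; case: b => b //=; case: (ranking a) => P_ge0 _; exact: P_ge0.
by apply: sumr_ge0 => j _; rewrite mulr_ge0 ?addr_ge0.
Qed.

Lemma W_eventually_le_of_lex_gt (R : realType) nN nI (a1 eta : R)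
    (u us : agent nN nI -> R) :
  1 < eta -> (forall j, us (inr j) < eta) -> (forall j, 0 <= u (inr j)) ->
  (-oo < user_welfare a1 us)%E -> lex_gt (items_part us) (items_part u) ->
  exists a0, a0 < 0 /\ forall a, a <= a0 ->
    (W (1 - eta `^ a) a1 a u <= W (1 - eta `^ a) a1 a us)%E.
Proof.
move=> eta1 us_lt u_ge0 us_fin /lex_gt_first_diff [i [im eq_below lt_at]].
have [[j uj0] | u_neq0] := pselect (exists j, u (inr j) = 0).
  by apply: W_eventually_le_of_Ny => // a a_lt0; left; exact: item_welfare_Ny uj0.
have u_gt0 j : 0 < items_part u j.
  by rewrite lt_def u_ge0 andbT; apply/eqP => uj0; apply: u_neq0; exists j.
have us_gt0 := first_diff_gt0 im eq_below lt_at u_gt0.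
case Eu: (user_welfare a1 u) (user_welfare_lt_pinfty a1 u) => [r| |] //= _; last first.
  by apply: W_eventually_le_of_Ny => // a _; right.
case Eus: (user_welfare a1 us) us_fin (user_welfare_lt_pinfty a1 us) => [rs| |] //= _ _.
have c_gt0 : 0 < srt (items_part u) i.
  by have [j ->] := nth_sorted_vals (items_part u) _ im.
have d_lt : srt (items_part us) i < eta.
  by have [j ->] := nth_sorted_vals (items_part us) _ im; exact: us_lt.
have [a0 [a0_lt0 dom]] := powR_dominates _ _ _ (r - rs) nI%:R
  c_gt0 lt_at (lt_trans lt_at d_lt) eta1 (ler0n _ _).
exists a0; split => // a ha; have a_lt0 : a < 0 by lra.
have u_items_neq0 j : u (inr j) != 0 by rewrite gt_eqF ?u_gt0.
have us_items_neq0 j : us (inr j) != 0 by rewrite gt_eqF ?us_gt0.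
rewrite /W Eu Eus !(item_welfareE a) // -!EFinM -!EFinD lee_fin.
have := sum_powR_first_diff im eq_below lt_at u_gt0 a a_lt0.
have := dom a ha; have := powR_lt1 _ _ eta1 a_lt0; rewrite /items_part /=.
set E := eta `^ a; set C := _ `^ a; set D := _ `^ a => E_lt1 dom_a gap.
have : (1 - E) * (C - nI%:R * D) <=
    (1 - E) * (\sum_(j < nI) u (inr j) `^ a - \sum_(j < nI) us (inr j) `^ a).
  by rewrite ler_wpM2l // subr_ge0 ltW.
lra.
Qed.

Theorem mainTheorem10 (R : realType) (nN nI : nat)
  (v : 'I_nI -> R) (mu : agent nN nI -> agent nN nI -> R)
  (hv0 : forall k, 0 <= v k)
  (hvdec : forall k l : 'I_nI, (k <= l)%N -> v l <= v k)
  (hmu : forall i j, 0 <= mu i j)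
  (a1 : R) (ha1 : a1 < 1)
  (ustar : agent nN nI -> R)
  (hustar : inUlex v mu ustar)
  (hmax : forall u, inUlex v mu u -> (user_welfare a1 u <= user_welfare a1 ustar)%E)
  (hfin : (-oo < user_welfare a1 ustar)%E) :
  forall eta : R, 1 < eta -> (forall j : 'I_nI, ustar (inr j) < eta) ->
  forall u, inU v mu u ->
  exists a0 : R, a0 < 0 /\
    forall a : R, a <= a0 ->
      (W (1 - eta `^ a) a1 a u <= W (1 - eta `^ a) a1 a ustar)%E.
Proof.
move=> eta eta1 ustar_lt u hu.
have [lt_u|nlt_u] := pselect (lex_gt (items_part ustar) (items_part u)).
  apply: W_eventually_le_of_lex_gt => // j.
  exact: inU_ge0 hv0 hmu hu (inr j).
have eq_srt := sorted_vals_lex_eq _ _ nlt_u (hustar.2 u hu).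
have u_lex : inUlex v mu u.
  split => // u' hu'; have := hustar.2 u' hu'.
  by rewrite /lex_ge /lex_gt /prefix_sum eq_srt.
exists (-1); split => [|a _]; first lra.
apply: W_le_same_items; last exact: hmax.
  by have := powR_ge0 eta a; lra.
by apply: item_welfare_sorted_vals; rewrite eq_srt.
Qed.
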